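(* Let $m\ge 2$ and $\beta=0$. A real number $\lambda$ is a principal eigenvalue of $\Delta_0$ (with homogeneous Dirichlet boundary condition) if and only if $\lambda\in(0,1]$. Moreover, for every $\lambda\in(0,1]$ the function $u(x)=(1-\lambda)^{|x|}$ (with the convention $0^0=1$) is an eigenfunction associated with $\lambda$.
   Context: Tree: for an integer $m\ge2$, the regular $m$-branching tree $\mathbb{T}_m$ has as vertices the root $\emptyset$ and all finite sequences $(\emptyset,a_1,\dots,a_k)$, $k\in\mathbb{N}$, $a_i\in\{0,\dots,m-1\}$. The level of $x=(\emptyset,a_1,\dots,a_k)$ is $|x|=k$ ($|\emptyset|=0$). The successors of $x$ are $(x,i)$, $i\in\{0,\dots,m-1\}$; for $x\ne\emptyset$, $\hat x$ denotes its unique immediate predecessor. A branch is an infinite sequence $(x_n)_{n\ge0}$ with $x_0=\emptyset$ and $x_{n+1}$ a successor of $x_n$; $\partial\mathbb{T}_m$ is the set of branches. For $y=(x_n)\in\partial\mathbb{T}_m$, $\lim_{x\to y}u(x)=L$ means $\lim_{n\to\infty}u(x_n)=L$ (similarly for $\liminf$, $\limsup$). Operator: for $\beta\in[0,1)$ let $p_\beta=1$ if $\beta=0$ and $p_\beta=\beta/(1-\beta)$ if $\beta\in(0,1)$. For $u:\mathbb{T}_m\to\mathbb{R}$, $\Delta_\beta u(\emptyset)=\frac1m\sum_{i=0}^{m-1}u(\emptyset,i)-u(\emptyset)$ and, for $x\ne\emptyset$, $\Delta_\beta u(x)=\big(\beta u(\hat x)+\frac{1-\beta}{m}\sum_{i=0}^{m-1}u(x,i)-u(x)\big)p_\beta^{-|x|}$.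 Eigenvalues: $\lambda\in\mathbb{R}$ is an eigenvalue of $\Delta_\beta$ if there is a bounded $u:\mathbb{T}_m\to\mathbb{R}$, $u\not\equiv0$, with $-\Delta_\beta u=\lambda u$ on $\mathbb{T}_m$ and $\lim_{x\to y}u(x)=0$ for every $y\in\partial\mathbb{T}_m$ ($u$ is an eigenfunction). An eigenvalue $\lambda>0$ is principal if it has a non-negative eigenfunction. *)

From HB Require Import structures.
From mathcomp Require Import all_boot all_order all_algebra.
From mathcomp Require Import all_classical all_reals all_analysis.
Set Implicit Arguments. Unset Strict Implicit. Unset Printing Implicit Defensive.
Import Order.TTheory GRing.Theory Num.Theory.
Import numFieldNormedType.Exports.
Local Open Scope classical_set_scope.
Local Open Scope ring_scope.

(* Vertices of the regular m-branching tree T_m: finite sequences over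
   {0,..,m-1}; the root is [::], the successors of x are rcons x i,
   and the level |x| is size x. *)
Definition vertex (m : nat) := seq 'I_m.

(* immediate predecessor (meaningful for x <> [::]) *)
Definition parent (m : nat) (x : vertex m) : vertex m := take (size x).-1 x.

Definition is_branch (m : nat) (b : nat -> vertex m) : Prop :=
  b 0%N = [::] /\ forall n, exists i : 'I_m, b n.+1 = rcons (b n) i.

Definition p_beta (R : realType) (beta : R) : R :=
  if beta == 0 then 1 else beta / (1 - beta).

Definition Delta (R : realType) (m : nat) (beta : R) (u : vertex m -> R)
  (x : vertex m) : R :=
  if x is [::] then m%:R^-1 * (\sum_(i < m) u (rcons x i)) - u x
  else (beta * u (parent x) + (1 - beta) / m%:R * (\sum_(i < m) u (rcons x i))
        - u x) / (p_beta beta ^+ size x).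

Definition bounded_fun (m : nat) (R : realType) (u : vertex m -> R) : Prop :=
  exists M : R, forall x, `|u x| <= M.

Definition eigenfunction (R : realType) (m : nat) (beta lam : R)
  (u : vertex m -> R) : Prop :=
  [/\ bounded_fun u,
      exists x, u x != 0,
      forall x, - @Delta R m beta u x = lam * u x
    & forall b, is_branch b -> (fun n => u (b n)) @ \oo --> (0 : R)].

Definition eigenvalue (R : realType) (m : nat) (beta lam : R) : Prop :=
  exists u : vertex m -> R, @eigenfunction R m beta lam u.

Definition principal_eigenvalue (R : realType) (m : nat) (beta lam : R) : Prop :=
  0 < lam /\ exists u : vertex m -> R, @eigenfunction R m beta lam u /\ forall x, 0 <= u x.

Arguments eigenfunction {R} m beta lam u.
Arguments eigenvalue {R} m beta lam.
Arguments principal_eigenvalue {R} m beta lam.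

(* At [beta = 0] the operator is [Delta u x = avg_i u (x,i) - u x], so an eigenfunction
   satisfies [(1 - lam) u x = avg_i u (x,i)].  For a non-negative eigenfunction the right
   side is non-negative, so [lam > 1] would force [u = 0]; hence [lam <= 1].  Conversely a
   function of the level alone, [u x = q ^+ |x|], has average [q * u x] over the
   successors, so [q = 1 - lam] gives an eigenfunction, bounded by 1 and decaying along
   every branch since [0 <= q < 1]. *)
From HB Require Import structures.
From mathcomp Require Import all_boot all_order all_algebra.
From mathcomp Require Import all_classical all_reals all_analysis.
Set Implicit Arguments. Unset Strict Implicit. Unset Printing Implicit Defensive.
Import Order.TTheory GRing.Theory Num.Theory.
Local Open Scope ring_scope.

Lemma Delta0E (R : realType) (m : nat) (u : vertex m -> R) (x : vertex m) :
  Delta 0 u x = m%:R^-1 * (\sum_(i < m) u (rcons x i)) - u x.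
Proof.
by case: x => [|a x] //=; rewrite /p_beta eqxx expr1n divr1 mul0r add0r subr0 div1r.
Qed.

Lemma size_branch (m : nat) (b : nat -> vertex m) (n : nat) :
  is_branch b -> size (b n) = n.
Proof.
move=> [b0 bS]; elim: n => [|n IHn]; first by rewrite b0.
by have [i ->] := bS n; rewrite size_rcons IHn.
Qed.

Lemma Delta0_level (R : realType) (m : nat) (f : nat -> R) (x : vertex m) :
  (0 < m)%N -> Delta 0 (fun y : vertex m => f (size y)) x = f (size x).+1 - f (size x).
Proof.
move=> m_gt0; rewrite Delta0E.
under eq_bigr => i _ do rewrite size_rcons.
by rewrite sumr_const card_ord -[f _ *+ m]mulr_natl mulKf // pnatr_eq0 -lt0n.
Qed.

Lemma eigenfunction0_avg (R : realType) (m : nat) (lam : R) (u : vertex m -> R)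
    (x : vertex m) :
  - Delta 0 u x = lam * u x -> (1 - lam) * u x = m%:R^-1 * \sum_(i < m) u (rcons x i).
Proof. by rewrite Delta0E opprB mulrBl mul1r => <-; rewrite opprB addrC subrK. Qed.

Lemma nonneg_eigenfunction0_le1 (R : realType) (m : nat) (lam : R) (u : vertex m -> R) :
  eigenfunction m 0 lam u -> (forall x, 0 <= u x) -> lam <= 1.
Proof.
move=> [_ [x ux_neq0] eigen_u _] u_ge0; rewrite leNgt; apply/negP => lam_gt1.
have avg_ge0 : 0 <= (1 - lam) * u x.
  by rewrite (eigenfunction0_avg (eigen_u x)) mulr_ge0 ?invr_ge0 ?ler0n ?sumr_ge0.
have : u x <= 0 by rewrite -(nmulr_rge0 _ (_ : 1 - lam < 0)) // subr_lt0.
by rewrite le_eqVlt ltNge u_ge0 orbF (negbTE ux_neq0).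
Qed.

Lemma level_power_eigenfunction (R : realType) (m : nat) (lam : R) :
  (0 < m)%N -> 0 < lam -> lam <= 1 ->
  eigenfunction m 0 lam (fun x : vertex m => (1 - lam) ^+ size x).
Proof.
move=> m_gt0 lam_gt0 lam_le1.
have q_ge0 : 0 <= 1 - lam by rewrite subr_ge0.
have q_lt1 : 1 - lam < 1 by rewrite ltrBlDr ltrDl.
split.
- by exists 1 => x; rewrite ger0_norm ?exprn_ge0 // exprn_ile1 // ltW.
- by exists [::]; rewrite expr0 oner_eq0.
- move=> x; rewrite (Delta0_level (fun n => (1 - lam) ^+ n)) // exprS.
  by rewrite opprB mulrBl mul1r opprB addrC subrK.
- move=> b b_branch.
  rewrite (_ : (fun n => _) = (fun n => (1 - lam) ^+ n)).
    by apply: cvg_expr; rewrite ger0_norm.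
  by apply: funext => n; rewrite size_branch.
Qed.

Theorem theorem1p1 (R : realType) (m : nat) (hm : (2 <= m)%N) :
  (forall lam : R, principal_eigenvalue m 0 lam <-> (0 < lam /\ lam <= 1)) /\
  (forall lam : R, 0 < lam -> lam <= 1 ->
     eigenfunction m 0 lam (fun x : vertex m => (1 - lam) ^+ size x)).
Proof.
have m_gt0 : (0 < m)%N by apply: leq_trans hm.
split=> [lam|lam]; last exact: level_power_eigenfunction.
split=> [[lam_gt0 [u [eigen_u u_ge0]]] | [lam_gt0 lam_le1]].
  by split=> //; exact: nonneg_eigenfunction0_le1 eigen_u u_ge0.
split=> //; exists (fun x : vertex m => (1 - lam) ^+ size x).
by split; [exact: level_power_eigenfunction | move=> x; rewrite exprn_ge0 // subr_ge0].
Qed.
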